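(* Let $g(x)=\frac1\nu\int_{1-\nu}^1\Phi\big(\mu(x,u\,\mathcal{C}'/R)\big)\,du$ for $x\in[0,1]$. Then $g$ is differentiable (piecewise) with $$g'(x)=\frac{R}{\mathcal{C}'}\int_{z_x^{low}}^{z_x^{max}}\big(1+\delta_a+\delta_z\big)^2\phi(z)\,dz,$$ where $z_x^{low}=\mu(x,(1-\nu)\mathcal{C}'/R)$, $z_x^{max}=\mu(x,\mathcal{C}'/R)$, $\delta_a=a/\sqrt{2\log M}$ and $\delta_z=z/\sqrt{2\log M}$. Furthermore, if $$R=\frac{\mathcal{C}'}{(1+\delta_a)^2(1+r/\log M)}\quad\text{with } r\ge r_0:=\frac{1}{2(1+\delta_a)^2},$$ then $g(x)-x$ is a decreasing function of $x$ on $[0,1]$.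
   Context: Fix an integer $M\ge2$, $snr>0$, $\nu=snr/(1+snr)$, constants $a\ge0$, $\mathcal{C}'>0$, $R>0$. $\Phi,\phi$ denote the standard normal distribution function and density. For $x\in[0,1]$ and $u>0$, $\mu(x,u)=\big(\sqrt{u/(1-x\nu)}-1\big)\sqrt{2\log M}-a$ (natural logarithm). *)

From Stdlib Require Import Reals Lra ClassicalEpsilon.
Open Scope R_scope.

(* Oriented Riemann integral of f from a to b (Stdlib RiemannInt);
   well defined whenever f is Riemann integrable (RiemannInt is proof
   irrelevant), and an arbitrary value otherwise. *)
Definition Rint (f : R -> R) (a b : R) : R :=
  epsilon (inhabits 0)
    (fun v => exists pr : Riemann_integrable f a b, RiemannInt pr = v).

Definition phi (z : R) : R := exp (- (z * z) / 2) / sqrt (2 * PI).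

Definition Phi (t : R) : R :=
  epsilon (inhabits 0)
    (fun l => Un_cv (fun n => Rint phi (- INR n) t) l).

Definition nu (snr : R) : R := snr / (1 + snr).

Definition mu (M : nat) (snr a : R) (x u : R) : R :=
  (sqrt (u / (1 - x * nu snr)) - 1) * sqrt (2 * ln (INR M)) - a.

Definition gfun (M : nat) (snr a C' Rt : R) (x : R) : R :=
  / nu snr * Rint (fun u => Phi (mu M snr a x (u * C' / Rt))) (1 - nu snr) 1.

From Stdlib Require Import Reals Lra ClassicalEpsilon.
From Coquelicot Require Import Coquelicot.
Open Scope R_scope.

(* Write L = sqrt(2 log M), c = 1 + a/L, q = 1 - x nu and m = u C'/R.  Since
   c + mu(x,m)/L = sqrt(m/q), the substitution z = mu(x,m) turns
   u |-> Phi(mu(x, u C'/R)) into an expression in Phi and in a primitive W of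
   the weighted density (c + z/L)^2 phi(z).  This gives g in closed form,
     g(x) = (1/nu) [G(C'/R, x) - G((1-nu) C'/R, x)],
     G(m, x) = Phi(mu(x,m)) R m/C' - (R q/C') W(mu(x,m)),
   whose x-derivative is (R/C') [W(z_max) - W(z_low)], the claimed integral.
   For the monotonicity, the total weighted mass is int (c + z/L)^2 phi = c^2 + 1/L^2,
   so under the rate condition g'(x) < 1 and the mean value theorem concludes. *)

(* auto_derive states its side equalities in Coquelicot's ring R_AbsRing;
   restating them over R lets ring and field apply. *)
Ltac real_eq := match goal with |- @eq _ ?u ?v => change (@eq R u v) end.

Lemma Rint_RInt (f : R -> R) (a b : R) : ex_RInt f a b -> Rint f a b = RInt f a b.
Proof.
  intros Hf. unfold Rint.
  destruct (epsilon_spec (inhabits 0)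
              (fun v => exists pr : Riemann_integrable f a b, RiemannInt pr = v)
              (ex_intro _ _ (ex_intro _ (ex_RInt_Reals_0 _ _ _ Hf) eq_refl)))
    as [pr Hpr].
  rewrite <- Hpr. symmetry. apply RInt_Reals.
Qed.

Lemma sub_id_decreasing (f f' : R -> R) (x y : R) :
  x < y ->
  (forall t, x <= t <= y -> is_derive f t (f' t)) ->
  (forall t, x <= t <= y -> f' t < 1) ->
  f y - y < f x - x.
Proof.
  intros Hxy Hder Hlt.
  destruct (MVT_cor2 (fun t => f t - t) (fun t => f' t - 1) x y Hxy) as [t [Hmvt Ht]].
  { intros t Ht. apply is_derive_Reals.
    apply (is_derive_minus (K:=R_AbsRing) (V:=R_NormedModule) f (fun t => t)).
    - now apply Hder.
    - apply (is_derive_id (K:=R_AbsRing)). }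
  assert (Hneg : (f' t - 1) * (y - x) < 0).
  { apply Rmult_neg_pos; [|lra]. specialize (Hlt t ltac:(lra)). lra. }
  lra.
Qed.

Definition gauss (x : R) : R := exp (- (x * x) / 2).

Lemma gauss_continuous (x : R) : continuous gauss x.
Proof.
  apply (ex_derive_continuous (V:=R_NormedModule)). unfold gauss. auto_derive. auto.
Qed.

Lemma ex_RInt_gauss (a b : R) : ex_RInt gauss a b.
Proof.
  apply (ex_RInt_continuous (V:=R_CompleteNormedModule)). intros; apply gauss_continuous.
Qed.

(* Feynman's integrand: its integral over x in [0,1] has t-derivative
   -gauss(t) int_0^t gauss, which makes (int_0^t gauss)^2 + 2 int_0^1 feynman t
   constant in t. *)
Definition feynman (t x : R) : R := exp (- (t * t) * (1 + x * x) / 2) / (1 + x * x).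

Lemma feynman_dt (t x : R) :
  is_derive (fun s => feynman s x) t (- t * exp (- (t * t) * (1 + x * x) / 2)).
Proof.
  assert (0 < 1 + x * x) by nra.
  unfold feynman. auto_derive; [auto|]. real_eq. unfold Rdiv. field. lra.
Qed.

Lemma ex_RInt_feynman (t : R) : ex_RInt (feynman t) 0 1.
Proof.
  apply (ex_RInt_continuous (V:=R_CompleteNormedModule)). intros x _.
  apply (ex_derive_continuous (V:=R_NormedModule)). unfold feynman. auto_derive. nra.
Qed.

(* The parametric derivative is jointly continuous, as differentiation under
   the integral sign requires. *)
Lemma feynman_dt_continuous (t x : R) :
  continuity_2d_pt (fun u v => Derive (fun s => feynman s v) u) t x.
Proof.
  apply continuity_2d_pt_ext with (f := fun u v => - u * exp (- (u * u) * (1 + v * v) / 2)).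
  { intros u v. symmetry. apply is_derive_unique, feynman_dt. }
  apply continuity_2d_pt_mult.
  - apply continuity_2d_pt_opp, continuity_2d_pt_id1.
  - apply continuity_1d_2d_pt_comp.
    + apply derivable_continuous_pt, derivable_pt_exp.
    + unfold Rdiv. apply continuity_2d_pt_mult; [|apply continuity_2d_pt_const].
      apply continuity_2d_pt_mult.
      * apply continuity_2d_pt_opp. apply continuity_2d_pt_mult; apply continuity_2d_pt_id1.
      * apply continuity_2d_pt_plus; [apply continuity_2d_pt_const|].
        apply continuity_2d_pt_mult; apply continuity_2d_pt_id2.
Qed.

(* Substituting y = t x: int_0^1 t e^{-t^2(1+x^2)/2} dx = gauss(t) int_0^t gauss. *)
Lemma RInt_feynman_dt (t : R) :
  RInt (fun x => Derive (fun s => feynman s x) t) 0 1 = - gauss t * RInt gauss 0 t.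
Proof.
  rewrite (RInt_ext _ (fun x => scal (- gauss t) (scal t (gauss (t * x + 0))))).
  2:{ intros x _. transitivity (- t * exp (- (t * t) * (1 + x * x) / 2)).
      { apply is_derive_unique, feynman_dt. }
      unfold gauss, scal; simpl; unfold mult; simpl.
      replace (- (t * t) * (1 + x * x) / 2) with
        (- (t * t) / 2 + - ((t * x + 0) * (t * x + 0)) / 2) by field.
      rewrite exp_plus. ring. }
  rewrite (RInt_scal (V:=R_CompleteNormedModule)).
  2:{ apply (ex_RInt_continuous (V:=R_CompleteNormedModule)). intros x _.
      apply (ex_derive_continuous (V:=R_NormedModule)).
      unfold gauss, scal; simpl; unfold mult; simpl. auto_derive. auto. }
  rewrite (RInt_comp_lin (V:=R_CompleteNormedModule)) by apply ex_RInt_gauss.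
  rewrite Rmult_0_r, Rplus_0_r, Rmult_1_r, Rplus_0_r. reflexivity.
Qed.

Lemma is_derive_RInt_feynman (t : R) :
  is_derive (fun s => RInt (feynman s) 0 1) t (- gauss t * RInt gauss 0 t).
Proof.
  rewrite <- RInt_feynman_dt.
  apply (is_derive_RInt_param feynman).
  - apply filter_forall. intros s x _. eexists. apply feynman_dt.
  - intros x _. apply feynman_dt_continuous.
  - apply filter_forall. intros s. apply ex_RInt_feynman.
Qed.

Definition feynman_energy (t : R) : R := (RInt gauss 0 t) ^ 2 + 2 * RInt (feynman t) 0 1.

Lemma feynman_energy_const (t : R) : feynman_energy t = feynman_energy 0.
Proof.
  assert (Hder : forall s, is_derive feynman_energy s 0).
  { intros s.
    assert (Hint : is_derive (fun s => RInt gauss 0 s) s (gauss s)).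
    { apply (is_derive_RInt (V:=R_CompleteNormedModule) gauss _ 0 s).
      - apply filter_forall. intros y. apply RInt_correct, ex_RInt_gauss.
      - apply gauss_continuous. }
    assert (H := is_derive_plus (K:=R_AbsRing) (V:=R_NormedModule) _ _ s _ _
       (is_derive_pow _ 2 s _ Hint) (is_derive_scal _ s 2 _ (is_derive_RInt_feynman s))).
    simpl in H. unfold plus in H; simpl in H.
    replace ((1 + 1) * gauss s * (RInt gauss 0 s * 1) + 2 * (- gauss s * RInt gauss 0 s))
      with 0 in H by ring.
    exact H. }
  assert (Hrint := is_RInt_derive (V:=R_CompleteNormedModule) feynman_energy (fun _ => 0) 0 t
                     (fun s _ => Hder s) (fun s _ => continuous_const _ _)).
  apply is_RInt_unique in Hrint.
  rewrite (is_RInt_unique _ _ _ _ (is_RInt_const (V:=R_NormedModule) 0 t 0)) in Hrint.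
  change ((t - 0) * 0 = feynman_energy t - feynman_energy 0) in Hrint. lra.
Qed.

(* At t = 0 the energy is 2 int_0^1 dx/(1+x^2) = 2 atan 1 = pi/2. *)
Lemma feynman_energy_0 : feynman_energy 0 = PI / 2.
Proof.
  unfold feynman_energy.
  rewrite (RInt_point (V:=R_CompleteNormedModule) 0 gauss).
  rewrite (RInt_ext (V:=R_CompleteNormedModule) _ (fun x => / (1 + x ^ 2))).
  2:{ intros x _. unfold feynman.
      replace (- (0 * 0) * (1 + x * x) / 2) with 0 by (unfold Rdiv; ring).
      rewrite exp_0. real_eq. field. nra. }
  assert (Hatan := is_RInt_derive (V:=R_CompleteNormedModule) atan (fun x => / (1 + x ^ 2)) 0 1
     (fun x _ => proj2 (is_derive_Reals _ _ _) (derivable_pt_lim_atan x))).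
  rewrite (is_RInt_unique _ _ _ _ (Hatan ltac:(intros x _;
     apply (ex_derive_continuous (V:=R_NormedModule)); auto_derive; nra))).
  change (zero ^ 2 + 2 * (atan 1 - atan 0) = PI / 2).
  rewrite atan_1, atan_0. change (0 ^ 2 + 2 * (PI / 4 - 0) = PI / 2). lra.
Qed.

Lemma RInt_gauss_sq_le (t : R) : (RInt gauss 0 t) ^ 2 <= PI / 2.
Proof.
  rewrite <- feynman_energy_0, <- (feynman_energy_const t). unfold feynman_energy.
  assert (0 <= RInt (feynman t) 0 1); [|lra].
  apply RInt_ge_0; [lra | apply ex_RInt_feynman |].
  intros x _. unfold feynman. apply Rle_mult_inv_pos; [apply Rlt_le, exp_pos | nra].
Qed.

Lemma sqrt_2PI_pos : 0 < sqrt (2 * PI).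
Proof. apply sqrt_lt_R0. generalize PI_RGT_0; lra. Qed.

Lemma phi_derive (z : R) : is_derive phi z (- z * phi z).
Proof.
  assert (Hs := sqrt_2PI_pos).
  unfold phi. auto_derive; [auto|]. real_eq. unfold Rdiv. field. lra.
Qed.

Lemma phi_continuous (z : R) : continuous phi z.
Proof.
  apply (ex_derive_continuous (V:=R_NormedModule)). eexists. apply phi_derive.
Qed.

Lemma ex_RInt_phi (a b : R) : ex_RInt phi a b.
Proof.
  apply (ex_RInt_continuous (V:=R_CompleteNormedModule)). intros; apply phi_continuous.
Qed.

Lemma phi_pos (z : R) : 0 < phi z.
Proof. unfold phi. apply Rdiv_lt_0_compat; [apply exp_pos | apply sqrt_2PI_pos]. Qed.

Lemma phi_opp (z : R) : phi (- z) = phi z.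
Proof. unfold phi. now replace (- z * - z) with (z * z) by ring. Qed.

Definition Phi0 (t : R) : R := RInt phi 0 t.

Lemma Phi0_bound (t : R) : -1/2 <= Phi0 t <= 1/2.
Proof.
  assert (Hs := sqrt_2PI_pos). assert (HPI := PI_RGT_0).
  assert (Hsq : Phi0 t ^ 2 <= 1/4).
  { unfold Phi0.
    rewrite (RInt_ext (V:=R_CompleteNormedModule) _ (fun z => scal (/ sqrt (2 * PI)) (gauss z)))
      by (intros; change (phi x = / sqrt (2 * PI) * gauss x); unfold phi, gauss, Rdiv; ring).
    rewrite (RInt_scal (V:=R_CompleteNormedModule)) by apply ex_RInt_gauss.
    change ((/ sqrt (2 * PI) * RInt gauss 0 t) ^ 2 <= 1/4).
    assert (Hg := RInt_gauss_sq_le t).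
    replace ((/ sqrt (2 * PI) * RInt gauss 0 t) ^ 2) with
      ((RInt gauss 0 t) ^ 2 / (sqrt (2 * PI) * sqrt (2 * PI))) by (field; lra).
    rewrite sqrt_sqrt by lra.
    apply Rmult_le_reg_r with (2 * PI); [lra|].
    unfold Rdiv. rewrite Rmult_assoc, Rinv_l by lra. lra. }
  nra.
Qed.

Lemma Phi0_derive (t : R) : is_derive Phi0 t (phi t).
Proof.
  apply (is_derive_RInt (V:=R_CompleteNormedModule) phi Phi0 0 t).
  - apply filter_forall. intros y. apply RInt_correct, ex_RInt_phi.
  - apply phi_continuous.
Qed.

Lemma RInt_phi (a b : R) : RInt phi a b = Phi0 b - Phi0 a.
Proof.
  unfold Phi0.
  rewrite <- (RInt_Chasles (V:=R_CompleteNormedModule) phi a 0 b) by apply ex_RInt_phi.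
  rewrite <- (opp_RInt_swap (V:=R_CompleteNormedModule) phi 0 a) by apply ex_RInt_phi.
  change (- RInt phi 0 a + RInt phi 0 b = RInt phi 0 b - RInt phi 0 a). ring.
Qed.

(* Phi differs from Phi0 by a constant: int_{-n}^0 phi increases with n and is
   bounded by 1/2, so its limit exists. *)
Lemma Phi_shift : exists l, forall t, Phi t = l + Phi0 t.
Proof.
  destruct (growing_cv (fun n => - Phi0 (- INR n))) as [l Hl].
  { intros n. rewrite S_INR.
    assert (0 <= RInt phi (- (INR n + 1)) (- INR n)).
    { apply RInt_ge_0; [lra | apply ex_RInt_phi | intros; apply Rlt_le, phi_pos]. }
    rewrite RInt_phi in *. lra. }
  { exists (1/2). intros v [n ->]. generalize (Phi0_bound (- INR n)). lra. }
  exists l. intros t.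
  assert (Hcv : Un_cv (fun n => Rint phi (- INR n) t) (l + Phi0 t)).
  { intros eps Heps. destruct (Hl eps Heps) as [N HN]. exists N. intros n Hn.
    rewrite Rint_RInt, RInt_phi by apply ex_RInt_phi.
    specialize (HN n Hn). unfold R_dist in *.
    now replace (Phi0 t - Phi0 (- INR n) - (l + Phi0 t)) with (- Phi0 (- INR n) - l) by ring. }
  apply (UL_sequence (fun n => Rint phi (- INR n) t)); [|exact Hcv].
  exact (epsilon_spec (inhabits 0) _ (ex_intro _ _ Hcv)).
Qed.

Lemma Phi_derive (t : R) : is_derive Phi t (phi t).
Proof.
  destruct Phi_shift as [l Hl].
  apply is_derive_ext with (f := fun s => l + Phi0 s); [intros; symmetry; apply Hl|].
  assert (H := is_derive_plus (K:=R_AbsRing) (V:=R_NormedModule) (fun _ => l) Phi0 t 0 (phi t)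
                 (is_derive_const _ _) (Phi0_derive t)).
  unfold plus in H; simpl in H. rewrite Rplus_0_l in H. exact H.
Qed.

Section WeightedGaussian.
Variables c L : R.

Definition wphi (z : R) : R := (c + z / L) ^ 2 * phi z.

(* An explicit primitive of wphi, obtained by integrating by parts twice. *)
Definition wPhi (t : R) : R :=
  (c ^ 2 + 1 / L ^ 2) * Phi0 t - phi t * (2 * c / L + t / L ^ 2).

Lemma wphi_continuous (z : R) : continuous wphi z.
Proof.
  apply (ex_derive_continuous (V:=R_NormedModule)).
  apply (ex_derive_mult (fun z => (c + z / L) ^ 2) phi).
  - auto_derive. auto.
  - eexists. apply phi_derive.
Qed.

Lemma ex_RInt_wphi (a b : R) : ex_RInt wphi a b.
Proof.
  apply (ex_RInt_continuous (V:=R_CompleteNormedModule)). intros; apply wphi_continuous.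
Qed.

Lemma RInt_wphi_ge0 (a b : R) : a <= b -> 0 <= RInt wphi a b.
Proof.
  intros Hab. apply RInt_ge_0; [exact Hab | apply ex_RInt_wphi |].
  intros z _. apply Rmult_le_pos; [apply pow2_ge_0 | apply Rlt_le, phi_pos].
Qed.

Hypothesis L_neq0 : L <> 0.

Lemma wPhi_derive (t : R) : is_derive wPhi t (wphi t).
Proof.
  assert (Hlin : is_derive (fun t => 2 * c / L + t / L ^ 2) t (/ L ^ 2)).
  { auto_derive; [auto|]. real_eq. field. auto. }
  assert (H := is_derive_minus (K:=R_AbsRing) (V:=R_NormedModule) _ _ t _ _
     (is_derive_scal Phi0 t (c ^ 2 + 1 / L ^ 2) _ (Phi0_derive t))
     (is_derive_mult (K:=R_AbsRing) phi _ t _ _ (phi_derive t) Hlin Rmult_comm)).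
  unfold minus, plus, opp, scal, mult in H; simpl in H; unfold mult in H; simpl in H.
  unfold wphi. replace ((c + t / L) ^ 2 * phi t) with
    ((c ^ 2 + 1 / L ^ 2) * phi t + - (- t * phi t * (2 * c / L + t / L ^ 2) + phi t * / L ^ 2))
    by (field; auto).
  exact H.
Qed.

Lemma RInt_wphi (a b : R) : RInt wphi a b = wPhi b - wPhi a.
Proof.
  apply is_RInt_unique.
  apply (is_RInt_derive (V:=R_CompleteNormedModule) wPhi wphi a b).
  - intros t _. apply wPhi_derive.
  - intros t _. apply wphi_continuous.
Qed.

(* The total weighted mass is E[(c + Z/L)^2] = c^2 + 1/L^2; every integral
   over a bounded interval is strictly smaller. *)
Lemma RInt_wphi_lt (a b : R) : RInt wphi a b < c ^ 2 + 1 / L ^ 2.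
Proof.
  set (n := Rabs a + Rabs b + 1).
  assert (Ha : - n <= a) by (unfold n; generalize (Rle_abs (- a)) (Rabs_pos b); rewrite Rabs_Ropp; lra).
  assert (Hb : b <= n) by (unfold n; generalize (Rle_abs b) (Rabs_pos a); lra).
  assert (Hn : 0 < n) by (unfold n; generalize (Rabs_pos a) (Rabs_pos b); lra).
  assert (Hright := RInt_wphi_ge0 b n Hb). assert (Hleft := RInt_wphi_ge0 (- n) a Ha).
  rewrite RInt_wphi in Hright, Hleft |- *.
  assert (Hsym : wPhi n - wPhi (- n)
                 = (c ^ 2 + 1 / L ^ 2) * (Phi0 n - Phi0 (- n)) - 2 * n * phi n / L ^ 2).
  { unfold wPhi. rewrite phi_opp. field. auto. }
  assert (HL2 : 0 < L ^ 2) by (apply pow2_gt_0; auto).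
  assert (Htail : 0 < 2 * n * phi n / L ^ 2).
  { apply Rdiv_lt_0_compat; [generalize (phi_pos n); nra | exact HL2]. }
  assert (Hmass : 0 <= c ^ 2 + 1 / L ^ 2).
  { assert (0 <= 1 / L ^ 2) by (apply Rlt_le, Rdiv_lt_0_compat; lra). nra. }
  assert (Hphi : Phi0 n - Phi0 (- n) <= 1) by (generalize (Phi0_bound n) (Phi0_bound (- n)); lra).
  assert ((c ^ 2 + 1 / L ^ 2) * (Phi0 n - Phi0 (- n)) <= c ^ 2 + 1 / L ^ 2) by nra.
  lra.
Qed.

(* Chain rule for w |-> Phi(Z w) A w - B w wPhi(Z w): when B (c + Z/L)^2 = A,
   the two terms carrying Z' cancel, so Z needs no explicit derivative. *)
Lemma is_derive_Phi_wPhi (Z A B : R -> R) (w dZ dA dB : R) :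
  is_derive Z w dZ -> is_derive A w dA -> is_derive B w dB ->
  B w * (c + Z w / L) ^ 2 = A w ->
  is_derive (fun w => Phi (Z w) * A w - B w * wPhi (Z w)) w
            (Phi (Z w) * dA - dB * wPhi (Z w)).
Proof.
  intros HZ HA HB Hweight.
  assert (HPhi := is_derive_comp (K:=R_AbsRing) (V:=R_NormedModule) Phi Z w _ _ (Phi_derive (Z w)) HZ).
  assert (HW := is_derive_comp (K:=R_AbsRing) (V:=R_NormedModule) wPhi Z w _ _ (wPhi_derive (Z w)) HZ).
  assert (H := is_derive_minus (K:=R_AbsRing) (V:=R_NormedModule) _ _ w _ _
     (is_derive_mult (K:=R_AbsRing) _ A w _ _ HPhi HA Rmult_comm)
     (is_derive_mult (K:=R_AbsRing) B _ w _ _ HB HW Rmult_comm)).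
  unfold minus, plus, opp, scal, mult in H; simpl in H; unfold mult in H; simpl in H.
  unfold wphi in H. rewrite <- Hweight in H.
  replace (Phi (Z w) * dA - dB * wPhi (Z w)) with
    (dZ * phi (Z w) * (B w * (c + Z w / L) ^ 2) + Phi (Z w) * dA
     + - (dB * wPhi (Z w) + B w * (dZ * ((c + Z w / L) ^ 2 * phi (Z w))))) by ring.
  exact H.
Qed.

End WeightedGaussian.

Section StateEvolution.
Variables (M : nat) (snr a C' Rt : R).
Hypothesis M_ge2 : (2 <= M)%nat.
Hypothesis snr_pos : 0 < snr.
Hypothesis C'_pos : 0 < C'.
Hypothesis Rt_pos : 0 < Rt.

Let L := sqrt (2 * ln (INR M)).
Let c := 1 + a / L.
Let nv := nu snr.

Lemma ln_M_pos : 0 < ln (INR M).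
Proof.
  rewrite <- ln_1. apply ln_increasing; [lra|].
  apply le_INR in M_ge2. simpl in M_ge2. lra.
Qed.

Lemma L_pos : 0 < L.
Proof. unfold L. apply sqrt_lt_R0. generalize ln_M_pos; lra. Qed.

Lemma L_sq : L ^ 2 = 2 * ln (INR M).
Proof. unfold L. apply pow2_sqrt. generalize ln_M_pos; lra. Qed.

Lemma nu_bounds : 0 < nv < 1.
Proof.
  unfold nv, nu. split; [apply Rdiv_lt_0_compat; lra|].
  apply Rmult_lt_reg_r with (1 + snr); [lra|].
  unfold Rdiv. rewrite Rmult_assoc, Rinv_l by lra. lra.
Qed.

(* c + mu(x,m)/L = sqrt(m/q) with q = 1 - x nu: the weight of wphi undoes
   the substitution z = mu(x,m). *)
Lemma weight_at_mu (x m : R) :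
  0 < 1 - x * nv -> 0 <= m ->
  (Rt * (1 - x * nv) / C') * (c + mu M snr a x m / L) ^ 2 = Rt * m / C'.
Proof.
  intros Hq Hm. assert (HL := L_pos). unfold mu, c. fold nv L.
  replace (1 + a / L + ((sqrt (m / (1 - x * nv)) - 1) * L - a) / L)
    with (sqrt (m / (1 - x * nv))) by (field; lra).
  rewrite pow2_sqrt by (apply Rle_mult_inv_pos; lra).
  field. lra.
Qed.

Lemma ex_derive_mu_x (x m : R) :
  0 < 1 - x * nv -> 0 < m -> ex_derive (fun y => mu M snr a y m) x.
Proof.
  intros Hq Hm. unfold mu. fold nv. auto_derive.
  repeat split; try lra. apply Rdiv_lt_0_compat; lra.
Qed.

Lemma ex_derive_mu_u (x u : R) :
  0 < 1 - x * nv -> 0 < u -> ex_derive (fun v => mu M snr a x (v * C' / Rt)) u.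
Proof.
  intros Hq Hu. unfold mu. fold nv. auto_derive.
  repeat split; try lra. apply Rdiv_lt_0_compat; [|lra].
  apply Rdiv_lt_0_compat; nra.
Qed.

(* The function G(m, x) of the proof outline: m = u C'/Rt gives a primitive
   in u of Phi(mu(x, u C'/Rt)), and it is also easy to differentiate in x. *)
Definition prim (m x : R) : R :=
  Phi (mu M snr a x m) * (Rt * m / C') - (Rt * (1 - x * nv) / C') * wPhi c L (mu M snr a x m).

Lemma prim_derive_u (x u : R) :
  0 < 1 - x * nv -> 0 < u ->
  is_derive (fun v => prim (v * C' / Rt) x) u (Phi (mu M snr a x (u * C' / Rt))).
Proof.
  intros Hq Hu. assert (HL := L_pos).
  assert (Hm : 0 <= u * C' / Rt) by (apply Rlt_le, Rdiv_lt_0_compat; nra).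
  replace (Phi (mu M snr a x (u * C' / Rt))) with
    (Phi (mu M snr a x (u * C' / Rt)) * 1 - 0 * wPhi c L (mu M snr a x (u * C' / Rt))) by ring.
  eapply (is_derive_Phi_wPhi c L (Rgt_not_eq _ _ HL) (fun v => mu M snr a x (v * C' / Rt))
           (fun v => Rt * (v * C' / Rt) / C') (fun _ => Rt * (1 - x * nv) / C')).
  - apply Derive_correct, ex_derive_mu_u; assumption.
  - auto_derive; [lra|]. real_eq. field. lra.
  - exact (is_derive_const (K:=R_AbsRing) (V:=R_NormedModule) _ _).
  - apply weight_at_mu; assumption.
Qed.

Lemma prim_derive_x (m x : R) :
  0 < 1 - x * nv -> 0 < m ->
  is_derive (prim m) x (Rt * nv / C' * wPhi c L (mu M snr a x m)).
Proof.
  intros Hq Hm. assert (HL := L_pos).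
  replace (Rt * nv / C' * wPhi c L (mu M snr a x m)) with
    (Phi (mu M snr a x m) * 0 - - (Rt * nv / C') * wPhi c L (mu M snr a x m)) by ring.
  eapply (is_derive_Phi_wPhi c L (Rgt_not_eq _ _ HL) (fun y => mu M snr a y m) (fun _ => Rt * m / C')
           (fun y => Rt * (1 - y * nv) / C')).
  - apply Derive_correct, ex_derive_mu_x; assumption.
  - exact (is_derive_const (K:=R_AbsRing) (V:=R_NormedModule) _ _).
  - auto_derive; [lra|]. real_eq. field. lra.
  - apply weight_at_mu; lra.
Qed.

Lemma gfun_closed (x : R) :
  0 < 1 - x * nv ->
  gfun M snr a C' Rt x = / nv * (prim (C' / Rt) x - prim ((1 - nv) * C' / Rt) x).
Proof.
  intros Hq. assert (Hnu := nu_bounds).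
  assert (Hcont : forall u, Rmin (1 - nv) 1 <= u <= Rmax (1 - nv) 1 ->
                  continuous (fun v => Phi (mu M snr a x (v * C' / Rt))) u).
  { intros u Hu. rewrite Rmin_left, Rmax_right in Hu by lra.
    apply (ex_derive_continuous (V:=R_NormedModule)). eexists.
    apply (is_derive_comp (K:=R_AbsRing) (V:=R_NormedModule) Phi).
    - apply Phi_derive.
    - apply Derive_correct, ex_derive_mu_u; lra. }
  assert (Hint := is_RInt_derive (V:=R_CompleteNormedModule) (fun v => prim (v * C' / Rt) x)
     (fun v => Phi (mu M snr a x (v * C' / Rt))) (1 - nv) 1).
  specialize (Hint ltac:(intros u Hu; rewrite Rmin_left, Rmax_right in Hu by lra;
                         apply prim_derive_u; lra) Hcont).
  unfold gfun. fold nv.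
  rewrite Rint_RInt by (eexists; exact Hint).
  rewrite (is_RInt_unique _ _ _ _ Hint), Rmult_1_l. reflexivity.
Qed.

Definition gder (x : R) : R :=
  Rt / C' * RInt (wphi c L) (mu M snr a x ((1 - nv) * C' / Rt)) (mu M snr a x (C' / Rt)).

Lemma gfun_derive (x : R) : 0 < 1 - x * nv -> is_derive (gfun M snr a C' Rt) x (gder x).
Proof.
  intros Hq. assert (Hnu := nu_bounds). assert (HL := L_pos).
  apply is_derive_ext_loc with
    (f := fun y => / nv * (prim (C' / Rt) y - prim ((1 - nv) * C' / Rt) y)).
  { apply (locally_interval _ x m_infty (1 / nv)); [exact I| |].
    - simpl. apply Rmult_lt_reg_r with nv; [lra|].
      unfold Rdiv. rewrite Rmult_assoc, Rinv_l by lra. lra.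
    - intros y _ Hy. simpl in Hy. symmetry. apply gfun_closed.
      apply Rmult_lt_compat_r with (r := nv) in Hy; [|lra].
      unfold Rdiv in Hy. rewrite Rmult_assoc, Rinv_l, Rmult_1_r in Hy by lra. lra. }
  assert (H := is_derive_scal _ x (/ nv) _
     (is_derive_minus (K:=R_AbsRing) (V:=R_NormedModule) _ _ x _ _
        (prim_derive_x (C' / Rt) x Hq ltac:(apply Rdiv_lt_0_compat; lra))
        (prim_derive_x ((1 - nv) * C' / Rt) x Hq ltac:(apply Rdiv_lt_0_compat; nra)))).
  unfold minus, plus, opp, scal in H; simpl in H; unfold mult in H; simpl in H.
  unfold gder. rewrite RInt_wphi by lra.
  replace (Rt / C' * (wPhi c L (mu M snr a x (C' / Rt))
                      - wPhi c L (mu M snr a x ((1 - nv) * C' / Rt)))) with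
    (/ nv * (Rt * nv / C' * wPhi c L (mu M snr a x (C' / Rt))
             + - (Rt * nv / C' * wPhi c L (mu M snr a x ((1 - nv) * C' / Rt)))))
    by (field; lra).
  exact H.
Qed.

(* Under the rate condition, Rt/C' = 1/D with D >= c^2 + 1/L^2, the total
   weighted mass, so g' < 1. *)
Lemma gder_lt_1 (r : R) :
  0 <= a ->
  1 / (2 * c ^ 2) <= r ->
  Rt = C' / (c ^ 2 * (1 + r / ln (INR M))) ->
  forall x, gder x < 1.
Proof.
  intros Ha Hr HRt x.
  assert (HL := L_pos). assert (Hln := ln_M_pos). assert (HL2 := L_sq).
  assert (Hc : 1 <= c) by (unfold c; generalize (Rle_mult_inv_pos a L Ha HL); unfold Rdiv; lra).
  assert (Hc2 : 1 <= c ^ 2) by nra.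
  assert (Hcr : 1 / 2 <= c ^ 2 * r).
  { apply Rmult_le_compat_l with (r := c ^ 2) in Hr; [|lra].
    replace (c ^ 2 * (1 / (2 * c ^ 2))) with (1 / 2) in Hr by (field; lra). exact Hr. }
  set (D := c ^ 2 * (1 + r / ln (INR M))) in *.
  assert (HD : c ^ 2 + 1 / L ^ 2 <= D).
  { unfold D. rewrite HL2.
    replace (c ^ 2 * (1 + r / ln (INR M))) with (c ^ 2 + c ^ 2 * r / ln (INR M)) by (field; lra).
    replace (1 / (2 * ln (INR M))) with (1 / 2 / ln (INR M)) by (field; lra).
    assert (1 / 2 / ln (INR M) <= c ^ 2 * r / ln (INR M)); [|lra].
    unfold Rdiv. apply Rmult_le_compat_r; [apply Rlt_le, Rinv_0_lt_compat|]; lra. }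
  assert (HD0 : 0 < D) by (assert (0 < 1 / L ^ 2) by (apply Rdiv_lt_0_compat; nra); lra).
  assert (Hmass := RInt_wphi_lt c L ltac:(lra)
                     (mu M snr a x ((1 - nv) * C' / Rt)) (mu M snr a x (C' / Rt))).
  unfold gder. replace (Rt / C') with (/ D) by (rewrite HRt; field; lra).
  apply Rmult_lt_reg_l with D; [lra|]. rewrite <- Rmult_assoc, Rinv_r by lra. lra.
Qed.

End StateEvolution.

Theorem lemma6 (M : nat) (snr a C' Rt : R)
  (hM : (2 <= M)%nat) (hsnr : 0 < snr) (ha : 0 <= a) (hC : 0 < C') (hR : 0 < Rt) :
  let L := sqrt (2 * ln (INR M)) in
  let da := a / L in
  (forall x : R, 0 <= x <= 1 ->
     derivable_pt_lim (gfun M snr a C' Rt) x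
       (Rt / C' *
        Rint (fun z => (1 + da + z / L) ^ 2 * phi z)
             (mu M snr a x ((1 - nu snr) * C' / Rt))
             (mu M snr a x (C' / Rt))))
  /\
  (forall r : R,
     1 / (2 * (1 + da) ^ 2) <= r ->
     Rt = C' / ((1 + da) ^ 2 * (1 + r / ln (INR M))) ->
     forall x y : R, 0 <= x -> x < y -> y <= 1 ->
       gfun M snr a C' Rt y - y < gfun M snr a C' Rt x - x).
Proof.
  intros L da.
  assert (Hnu := nu_bounds snr hsnr).
  assert (Hder : forall x, 0 <= x <= 1 -> is_derive (gfun M snr a C' Rt) x (gder M snr a C' Rt x)).
  { intros x Hx. apply gfun_derive; try assumption. nra. }
  split.
  - intros x Hx. apply is_derive_Reals.
    rewrite Rint_RInt by apply (ex_RInt_wphi (1 + da) L).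
    exact (Hder x Hx).
  - intros r Hr HRt x y Hx Hxy Hy.
    apply (sub_id_decreasing _ (gder M snr a C' Rt) x y Hxy).
    + intros t Ht. apply Hder. lra.
    + intros t _. exact (gder_lt_1 M snr a C' Rt hM hC r ha Hr HRt t).
Qed.
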